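(* Let $p$ be an odd prime with $p\equiv 5\pmod 8$. Then there exists a perfect $B[-1,3](p)$ set if and only if $6$ is a quartic residue modulo $p$, i.e. there is an integer $x$ with $x^4\equiv 6\pmod p$.
   Context: A set $B\subseteq\mathbb{Z}_p$ is a perfect $B[-1,3](p)$ set if every nonzero element of $\mathbb{Z}_p$ has a unique representation $ab \bmod p$ with $a\in\{-1,1,2,3\}$ and $b\in B$ (and $0$ has no such representation); equivalently $B\subseteq\mathbb{Z}_p^\ast$, $|B|=(p-1)/4$, and the sets $\{-b,b,2b,3b\}$, $b\in B$, partition $\mathbb{Z}_p^\ast=\mathbb{Z}_p\setminus\{0\}$. *)

(* Elements of Z_p are represented by 'I_p (residues 0..p-1). *)
From mathcomp Require Import all_boot.
Set Implicit Arguments. Unset Strict Implicit. Unset Printing Implicit Defensive.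

(* The multiplier set {-1, 1, 2, 3} as residues mod p, indexed by 'I_4:
   index 0 -> -1 (i.e. p - 1), 1 -> 1, 2 -> 2, 3 -> 3. *)
Definition mult_m13 (p : nat) (i : 'I_4) : nat :=
  match val i with
  | 0 => p - 1
  | k => k
  end.

Definition repr_m13 (p : nat) (i : 'I_4) (b : nat) : nat :=
  (mult_m13 p i * b) %% p.

Definition perfect_B_m13 (p : nat) (B : {set 'I_p}) : Prop :=
  (forall x : 'I_p, val x != 0 ->
     exists! ab : 'I_4 * 'I_p, (ab.2 \in B) /\ repr_m13 p ab.1 (val ab.2) = val x)
  /\ (forall (i : 'I_4) (b : 'I_p), b \in B -> repr_m13 p i (val b) != 0).

(* Write m = (p-1)/4, which is odd because p = 5 (mod 8).  If B is perfect, the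
   sets {-b, b, 2b, 3b} partition the units, so |B| = m and Wilson's theorem gives
   -1 = (p-1)! = (-6)^m (prod B)^4; as m is odd this makes 6 a fourth power.
   Conversely, if 6 = x^4 then 6^m = 1, while 2^m is a square root of -1 (raise
   (1 + i)^2 = 2i to the power 2m, where i^2 = -1).  Hence -1, 1, 2, 3 have the
   four distinct fourth roots of unity -1, 1, 2^m, -2^m as m-th powers: they
   represent the four cosets of the subgroup of fourth powers, and that subgroup
   is a perfect set. *)

From mathcomp Require Import all_boot all_algebra all_field.
From mathcomp Require Import ring zify.

Set Implicit Arguments.
Unset Strict Implicit.
Unset Printing Implicit Defensive.

Import GRing.Theory.

Lemma repr_m13_mod p i b : repr_m13 p i b %% p = repr_m13 p i b.
Proof. by rewrite /repr_m13 modn_mod. Qed.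

Lemma perfect_B_m13_big {p} {R : Type} {idx : R} (op : Monoid.com_law idx)
    {B : {set 'I_p}} (G : nat -> R) :
  0 < p -> perfect_B_m13 B ->
  \big[op/idx]_(1 <= k < p) G k =
  \big[op/idx]_(i < 4) \big[op/idx]_(b in B) G (repr_m13 p i (val b)).
Proof.
move=> p_gt0 [uniq_repr repr_neq0].
rewrite pair_big /=.
pose r (ib : 'I_4 * 'I_p) : 'I_p :=
  Ordinal (ltn_pmod (repr_m13 p ib.1 (val ib.2)) p_gt0).
rewrite (partition_big r (fun x : 'I_p => val x != 0)) /=; last first.
  by move=> ib /= ib_B; rewrite repr_m13_mod; apply: repr_neq0.
have fibre x : val x != 0 ->
    \big[op/idx]_(ib | (ib.2 \in B) && (r ib == x)) G (repr_m13 p ib.1 (val ib.2))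
    = G (val x).
  move=> x_neq0; have [ib0 [[ib0_B ib0_x] ib0_uniq]] := uniq_repr x x_neq0.
  rewrite (big_pred1 ib0) ?ib0_x // => ib /=; apply/idP/eqP.
    case/andP=> ib_B /eqP ib_x; apply: esym; apply: ib0_uniq; split=> //.
    by rewrite -ib_x /= repr_m13_mod.
  by move=> ->; rewrite ib0_B; apply/eqP/val_inj; rewrite /= repr_m13_mod.
rewrite (eq_bigr _ fibre) -(big_mkord (fun k => k != 0) G).
rewrite [RHS]big_ltn_cond //= [RHS]big_nat_cond [LHS]big_nat_cond.
by apply: eq_bigl => -[].
Qed.

Lemma perfect_B_m13_card p (B : {set 'I_p}) :
  0 < p -> perfect_B_m13 B -> #|B| * 4 = p.-1.
Proof.
move=> p_gt0 B_perfect.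
have := perfect_B_m13_big addn (fun=> 1) p_gt0 B_perfect.
rewrite sum_nat_const_nat muln1 subn1 => ->.
by rewrite big_const_ord iter_addn_0 sum1_card mulnC.
Qed.

Local Open Scope ring_scope.

Lemma fourth_power_of_odd_power (F : fieldType) (c y : F) n :
  odd n -> c ^+ n * y ^+ 4 = 1 -> exists x : F, x ^+ 4 = c.
Proof.
move=> n_odd; set z := c ^+ (n %/ 4) * y.
have -> : c ^+ n * y ^+ 4 = c ^+ (n %% 4) * z ^+ 4.
  by rewrite /z exprMn -exprM [RHS]mulrA -exprD addnC -divn_eq.
have [->|->] : (n %% 4 = 1 \/ n %% 4 = 3)%N by lia.
  by move=> cz; exists z^-1; rewrite exprVn; apply: mulr1_eq; rewrite mulrC.
move=> cz; exists (c * z).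
by rewrite exprMn -[c in RHS]mulr1 -cz (exprS c 3); ring.
Qed.

Section PrimeField.

Variable p : nat.
Hypothesis p_pr : prime p.

Local Notation F := 'F_p.

Lemma natFp_eq m n : (m%:R = n%:R :> F) <-> (m = n %[mod p])%N.
Proof.
split=> [/(congr1 val)|mn]; first by rewrite /= !val_Fp_nat.
by apply: val_inj; rewrite /= !val_Fp_nat // mn.
Qed.

Lemma natFp_eq0 n : (n%:R == 0 :> F) = (p %| n)%N.
Proof. by rewrite -(inj_eq val_inj) /= val_Fp_nat. Qed.

Lemma natFp_neq0 n : (0 < n < p)%N -> n%:R != 0 :> F.
Proof. by move=> n_bd; rewrite natFp_eq0; apply/negP => /dvdn_leq; lia. Qed.

Lemma natFp_opp m n : (m + n)%N = p -> m%:R = - n%:R :> F.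
Proof. by move=> mn; apply/eqP; rewrite -addr_eq0 -natrD mn natFp_eq0. Qed.

Lemma natFp_inj (a b : 'I_p) : (val a)%:R = (val b)%:R :> F -> a = b.
Proof. by move/natFp_eq; rewrite !modn_small ?ltn_ord // => /val_inj. Qed.

Lemma natFp_surj (y : F) : exists b : 'I_p, (val b)%:R = y.
Proof.
have y_lt : (val y < p)%N by case: y; rewrite (Fp_cast p_pr).
by exists (Ordinal y_lt); apply: natr_Zp.
Qed.

Lemma Fp_fermat (y : F) : y != 0 -> y ^+ p.-1 = 1.
Proof.
move=> y_neq0; apply: (mulfI y_neq0); rewrite -exprS prednK ?prime_gt0 //.
by rewrite mulr1 -[RHS](expf_card y) card_Fp.
Qed.

Lemma Fp_wilson : \prod_(1 <= k < p) k%:R = -1 :> F.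
Proof.
have p_gt0 := prime_gt0 p_pr.
have := Wilson (prime_gt1 p_pr); rewrite p_pr => /esym.
rewrite fact_prod prednK // -natFp_eq0 -natr1 natr_prod addr_eq0.
by move/eqP.
Qed.

Lemma Fp_sqrtN1 : (p %% 4 = 1)%N -> exists i : F, i ^+ 2 = -1.
Proof.
move=> p_mod4; set h := (p.-1 %/ 2)%N.
exists (\prod_(1 <= k < h.+1) k%:R).
have reflect_half : \prod_(h.+1 <= k < p) k%:R = \prod_(1 <= k < h.+1) - k%:R :> F.
  rewrite -{1}(add0n h.+1) big_addn big_add1 /= (_ : (p - h.+1 = h)%N); last lia.
  by rewrite big_nat_rev /=; apply: eq_big_nat => k k_bd; apply: natFp_opp; lia.
have := Fp_wilson; rewrite (@big_cat_nat _ _ _ h.+1) /=; try lia.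
rewrite reflect_half; under [X in _ * X]eq_bigr do rewrite -mulN1r.
rewrite big_split /= prodr_const_nat subn1 /= -signr_odd.
by rewrite (_ : odd h = false) ?mul1r ?expr2 //; lia.
Qed.

Definition mulFp (i : 'I_4) : F := (mult_m13 p i)%:R.

Lemma mulFp0 : mulFp ord0 = -1.
Proof. by rewrite /mulFp /= (@natFp_opp (p - 1) 1) //; have := prime_gt1 p_pr; lia. Qed.

Lemma prod_mulFp : \prod_i mulFp i = -6.
Proof. by rewrite !big_ord_recl big_ord0 mulFp0 /mulFp /mult_m13 /= /bump /=; ring. Qed.

Lemma repr_m13_Fp i b : (repr_m13 p i b)%:R = mulFp i * b%:R.
Proof. by rewrite /repr_m13 Fp_nat_mod // natrM. Qed.

Lemma repr_m13_eqFp i (b x : 'I_p) :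
  repr_m13 p i (val b) = val x <-> mulFp i * (val b)%:R = (val x)%:R.
Proof. by rewrite -repr_m13_Fp natFp_eq repr_m13_mod (modn_small (ltn_ord x)). Qed.

Lemma perfect_B_m13_prod (B : {set 'I_p}) : perfect_B_m13 B ->
  (-6) ^+ #|B| * (\prod_(b in B) (val b)%:R) ^+ 4 = -1 :> F.
Proof.
move=> B_perfect; rewrite -Fp_wilson.
rewrite (perfect_B_m13_big *%R (fun k => k%:R) (prime_gt0 p_pr) B_perfect).
under [RHS]eq_bigr do under eq_bigr do rewrite repr_m13_Fp.
under [RHS]eq_bigr do rewrite big_split /= prodr_const.
by rewrite big_split /= prodrXl prod_mulFp prodr_const card_ord.
Qed.

Lemma perfect_B_m13_pow_kernel m : (0 < m)%N -> (forall i, mulFp i != 0) ->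
    injective (fun i => mulFp i ^+ m) ->
    (forall y : F, y != 0 -> exists i, mulFp i ^+ m = y ^+ m) ->
  perfect_B_m13 [set b : 'I_p | (val b)%:R ^+ m == 1 :> F].
Proof.
move=> m_gt0 mul_neq0 pow_inj pow_cover.
have pow_eq1_neq0 (y : F) : y ^+ m = 1 -> y != 0.
  by apply: contra_eq_neq => ->; rewrite expr0n gtn_eqF //= eq_sym oner_eq0.
split=> [x x_neq0 | i b]; last first.
  rewrite inE => /eqP /pow_eq1_neq0 b_neq0.
  have := mulf_neq0 (mul_neq0 i) b_neq0; rewrite -repr_m13_Fp natFp_eq0.
  by apply: contraNneq => ->; rewrite dvdn0.
set y : F := (val x)%:R.
have y_neq0 : y != 0 by apply: natFp_neq0; rewrite lt0n x_neq0 ltn_ord.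
have [i i_y] := pow_cover y y_neq0.
have [b b_y] := natFp_surj (y / mulFp i).
exists (i, b); split=> [|[i' b'] /= [b'_B /repr_m13_eqFp]]; rewrite -/y.
  split=> /=; last by apply/repr_m13_eqFp; rewrite b_y mulrC divfK.
  by rewrite inE b_y expr_div_n i_y divff // expf_neq0.
move=> b'_x; move: b'_B; rewrite inE => /eqP b'_m.
have i'_i : i' = i by apply: pow_inj; rewrite /= i_y -b'_x exprMn b'_m mulr1.
subst i'; congr (_, _); apply: natFp_inj.
by rewrite b_y -b'_x mulrC (mulKf (mul_neq0 i)).
Qed.

Section FiveModEight.

Hypothesis p_mod8 : (p %% 8 = 5)%N.

Local Notation m := (p.-1 %/ 4)%N.
Local Notation j := ((2 : F) ^+ m).

Lemma two_neq0 : (2 : F) != 0.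
Proof. by apply: natFp_neq0; lia. Qed.

Lemma sqr_two_pow_quarter : j ^+ 2 = -1.
Proof.
have [i i2] := Fp_sqrtN1 (ltac:(lia)).
have one_i_neq0 : 1 + i != 0.
  apply/eqP => i_eq; have i_N1 : i = -1 by rewrite -(addKr 1 i) i_eq addr0.
  have : (2 : F) = 1 - i ^+ 2 by rewrite i2; ring.
  by rewrite i_N1 sqrrN expr1n subrr; move/eqP; rewrite (negbTE two_neq0).
have sqr_one_i : (1 + i) ^+ 2 = 2 * i.
  rewrite (_ : (1 + i) ^+ 2 = 2 * i + (i ^+ 2 + 1)); last by ring.
  by rewrite i2 addNr addr0.
have := Fp_fermat one_i_neq0; rewrite {1}(_ : p.-1 = 2 * (2 * m))%N; last lia.
rewrite exprM sqr_one_i exprMn [i ^+ _]exprM i2 -signr_odd (_ : odd m); last lia.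
by rewrite mulrN1 => /eqP; rewrite eqr_oppLR -exprM mulnC => /eqP.
Qed.

Definition fourth_roots : seq F := [:: -1; 1; j; - j].

Lemma uniq_fourth_roots : uniq fourth_roots.
Proof.
have N1_neq1 : (-1 : F) != 1.
  by rewrite eq_sym -addr_eq0 (_ : 1 + 1 = 2 :> F) ?two_neq0.
have j_neq1 : j != 1.
  by apply: contra_neq N1_neq1 => j1; rewrite -sqr_two_pow_quarter j1 expr1n.
have j_neqN1 : j != -1.
  by apply: contra_neq N1_neq1 => j1; rewrite -sqr_two_pow_quarter j1 sqrrN expr1n.
have j_neqNj : j != - j.
  by rewrite -addr_eq0 (_ : j + j = 2 * j) ?mulf_neq0 ?expf_neq0 ?two_neq0 //; ring.
rewrite /fourth_roots /= !inE !negb_or N1_neq1 j_neqNj eqr_opp !(eq_sym 1) (eq_sym (-1)).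
by rewrite eqr_oppLR j_neq1 j_neqN1.
Qed.

Lemma mem_fourth_roots y : (y \in fourth_roots) = (y ^+ 4 == 1).
Proof.
rewrite -subr_eq0 (_ : y ^+ 4 - 1 = (y - -1) * (y - 1) * ((y - j) * (y - - j))).
  by rewrite !mulf_eq0 !subr_eq0 !inE !orbA.
rewrite (_ : (y - j) * (y - - j) = y ^+ 2 - j ^+ 2); last by ring.
by rewrite sqr_two_pow_quarter; ring.
Qed.

Lemma mulFp_pow_quarter (x : F) :
  x ^+ 4 = 6 -> forall i, mulFp i ^+ m = fourth_roots`_i.
Proof.
move=> x4 i.
have j_neq0 : j != 0 by rewrite expf_neq0 ?two_neq0.
have six_neq0 : (6 : F) != 0.
  by rewrite (_ : 6 = 2 * 3 :> F) 1?mulf_neq0 ?two_neq0 ?natFp_neq0 //; [lia | ring].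
have x_neq0 : x != 0 by apply: contraNneq six_neq0 => x0; rewrite -x4 x0 expr0n.
have six_m : (6 : F) ^+ m = 1.
  by rewrite -x4 -exprM mulnC (_ : (m * 4 = p.-1)%N) ?Fp_fermat //; lia.
have three_m : (3 : F) ^+ m = - j.
  apply: (mulfI j_neq0); rewrite -exprMn mulrN -expr2 sqr_two_pow_quarter opprK.
  by rewrite (_ : 2 * 3 = 6 :> F) //; ring.
case: i => -[|[|[|[|//]]]] i_lt; rewrite /mulFp /mult_m13 /=.
- by rewrite (@natFp_opp (p - 1) 1) ?subnK ?prime_gt0 // -signr_odd (_ : odd m) //; lia.
- by rewrite expr1n.
- by [].
- exact: three_m.
Qed.

Lemma perfect_B_m13_of_quartic_six (x : F) : x ^+ 4 = 6 ->
  perfect_B_m13 [set b : 'I_p | (val b)%:R ^+ m == 1 :> F].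
Proof.
move=> x4; have pow_quarter := mulFp_pow_quarter x4.
apply: perfect_B_m13_pow_kernel => [|i|i k|y y_neq0].
- lia.
- have : fourth_roots`_i ^+ 4 == 1 by rewrite -mem_fourth_roots mem_nth.
  rewrite -pow_quarter; apply: contraTneq => ->.
  by rewrite -exprM expr0n muln_eq0 gtn_eqF //=; lia.
- rewrite /= !pow_quarter => /eqP; rewrite nth_uniq ?uniq_fourth_roots //.
  by move/eqP/val_inj.
- have : (y ^+ m) ^+ 4 == 1.
    by rewrite -exprM (_ : (m * 4 = p.-1)%N) ?Fp_fermat //; lia.
  rewrite -mem_fourth_roots => /(nthP 0) [k k_lt k_y].
  by exists (Ordinal k_lt); rewrite pow_quarter.
Qed.

Lemma quartic_six_of_perfect_B_m13 (B : {set 'I_p}) :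
  perfect_B_m13 B -> exists x : F, x ^+ 4 = 6.
Proof.
move=> B_perfect; have card_B := perfect_B_m13_card (prime_gt0 p_pr) B_perfect.
have B_odd : odd #|B| by lia.
apply: (fourth_power_of_odd_power (y := \prod_(b in B) (val b)%:R) B_odd).
apply: oppr_inj; rewrite -(perfect_B_m13_prod B_perfect).
by rewrite exprNn -signr_odd B_odd expr1 mulN1r mulNr.
Qed.

End FiveModEight.

End PrimeField.

Local Close Scope ring_scope.

Theorem theorem4p6 (p : nat) :
  prime p -> odd p -> p %% 8 = 5 ->
  ((exists B : {set 'I_p}, perfect_B_m13 B) <->
   (exists x : nat, x ^ 4 = 6 %[mod p])).
Proof.
move=> p_pr _ p_mod8.
have quarticE (x : nat) : x ^ 4 = 6 %[mod p] <-> ((x%:R : 'F_p) ^+ 4 = 6)%R.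
  by rewrite -natrX; apply: iff_sym; apply: natFp_eq.
split=> [[B /(quartic_six_of_perfect_B_m13 p_pr p_mod8) [x x4]] | [x /quarticE x4]].
  by exists (val x); apply/quarticE; rewrite natr_Zp.
by eexists; apply: (perfect_B_m13_of_quartic_six p_pr p_mod8 x4).
Qed.
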